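(* Let $T=(V,L)$ be a substrate tree, $\mathcal{J}=\langle N,B\rangle$ a request, and $N'\in\{1,\dots,N\}$ an integer. Let $\mathcal{C}$ be a VCE of the augmented request $\mathcal{J}'=\langle N+N',B\rangle$ in $T$ such that $\mathcal{C}(h)\le N'$ for every PM $h\in H$. Then $(\mathcal{C}_s,\mathcal{B}_s)$ with $\mathcal{C}_s=\mathcal{C}$ and $\mathcal{B}_s(l_v)=\min\{n_v,N+N'-n_v\}\cdot B$ (where $n_v=\sum_{h\in H\cap T_v}\mathcal{C}(h)$) is a feasible SVCE of $\mathcal{J}$.
   Context: Substrate: an undirected tree $T=(V,L)$ with $V=H\cup S$, where $H$ (the physical machines, PMs) are exactly the leaves and $S$ (switches) are the internal nodes, rooted at some $r\in S$. For $v\in V$, $T_v$ is the subtree rooted at $v$ and $l_v$ is the link from $v$ to its parent. Each PM $h$ has $c_h\in\mathbb{Z}_{\ge0}$ available VM slots and each non-root node $v$ has available bandwidth $b_v\ge0$ on $l_v$. A request is $\langle M,B\rangle$ with $M$ a positive integer and $B\ge0$. VCE: given a tree with PM capacities $c_h$ and link bandwidths $b_v$, a virtual cluster embedding of $\langle M,B\rangle$ is a function $\mathcal{C}:H\to\mathbb{Z}_{\ge0}$ with $\mathcal{C}(h)\le c_h$ for all $h$, $\sum_{h\in H}\mathcal{C}(h)=M$, and $\min\{n_v,M-n_v\}\cdot B\le b_v$ for every link $l_v$, where $n_v=\sum_{h\in H\cap T_v}\mathcal{C}(h)$. SVCE of $\mathcal{J}=\langle N,B\rangle$: a pair $(\mathcal{C}_s,\mathcal{B}_s)$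 with $\mathcal{C}_s:H\to\mathbb{Z}_{\ge0}$, $\mathcal{C}_s(h)\le c_h$, and $\mathcal{B}_s:L\to\mathbb{R}_{\ge0}$, $\mathcal{B}_s(l_v)\le b_v$, such that for every PM $F\in H$ there exists a VCE of $\langle N,B\rangle$ in the tree $(V\setminus\{F\},L\setminus\{l_F\})$ whose PM capacities are $\mathcal{C}_s(h)$ ($h\neq F$) and whose link bandwidths are $\mathcal{B}_s(l_v)$. *)

From mathcomp Require Import all_boot all_order all_algebra.
Set Implicit Arguments. Unset Strict Implicit. Unset Printing Implicit Defensive.
Import Order.TTheory GRing.Theory Num.Theory.
Local Open Scope ring_scope.

(* A rooted tree on a finite vertex type V is given by a parent map:
   the root r is its own parent, every vertex reaches r by iterating parent,
   and the root has at least one child (so r is a switch, not a leaf). The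
   link l_v of a non-root v is the edge {v, parent v}. *)
Definition is_rooted_tree (V : finType) (parent : V -> V) (r : V) : Prop :=
  [/\ parent r = r,
      (forall v, exists k, iter k parent v = r)
    & exists v, v != r /\ parent v = r].

Definition is_pm (V : finType) (parent : V -> V) (v : V) : bool :=
  ~~ [exists u, (u != v) && (parent u == v)].

Definition in_subtree (V : finType) (parent : V -> V) (v u : V) : bool :=
  fconnect parent u v.

Definition nv (V : finType) (parent : V -> V) (X : {set V}) (C : V -> nat)
    (v : V) : nat :=
  (\sum_(h | is_pm parent h && (h \notin X) && in_subtree parent v h) C h)%N.

(* VCE of <M,B> in the tree obtained from T by deleting the PMs in X (and
   their links), with PM capacities c and link bandwidths b (b v is the
   bandwidth of link l_v).  Only the values of C on remaining PMs matter. *)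
Definition vce (R : realFieldType) (V : finType) (parent : V -> V) (r : V)
    (X : {set V}) (c : V -> nat) (b : V -> R) (M : nat) (B : R)
    (C : V -> nat) : Prop :=
  [/\ (forall h, is_pm parent h -> h \notin X -> (C h <= c h)%N),
      (\sum_(h | is_pm parent h && (h \notin X)) C h)%N = M
    & forall v, v != r -> v \notin X ->
        (minn (nv parent X C v) (M - nv parent X C v))%:R * B <= b v].

Definition svce (R : realFieldType) (V : finType) (parent : V -> V) (r : V)
    (c : V -> nat) (b : V -> R) (N : nat) (B : R)
    (Cs : V -> nat) (Bs : V -> R) : Prop :=
  [/\ (forall h, is_pm parent h -> (Cs h <= c h)%N),
      (forall v, v != r -> 0 <= Bs v <= b v)
    & forall F, is_pm parent F ->
        exists C, vce parent r [set F] Cs Bs N B C].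

From mathcomp Require Import all_boot all_order all_algebra.
From mathcomp Require Import zify.
Import Order.TTheory GRing.Theory Num.Theory.
Local Open Scope ring_scope.

(* When a PM F fails, discard its VMs and then further VMs elsewhere until
   exactly N remain; this is possible because F hosts at most N' of the N + N'
   VMs.  Every subtree then hosts n with n_v - N' <= n <= n_v, so the cut
   min{n, N - n} is at most min{n_v, N + N' - n_v}, the bandwidth reserved. *)

Lemma leq_minn_shift (a a' d M : nat) :
  (a' <= a)%N -> (a <= a' + d)%N ->
  (minn a' (M - a') <= minn a (M + d - a))%N.
Proof. lia. Qed.

Lemma exists_subfun_sum (I : finType) (P : pred I) (f : I -> nat) (n : nat) :
  (n <= \sum_(i | P i) f i)%N ->
  exists g : I -> nat, (forall i, g i <= f i)%N /\ (\sum_(i | P i) g i)%N = n.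
Proof.
elim: n => [|n IHn] le_n_sum.
  by exists (fun=> 0%N); split=> //; rewrite big1.
have [g [le_g_f sum_g]] := IHn (ltnW le_n_sum).
case: (pickP (fun i => P i && (g i < f i)%N)) => [i0 /andP[Pi0 lt_gf] | full].
  exists (fun i => g i + (i == i0))%N; split.
    by move=> i; case: eqP => [->|_]; rewrite ?addn1 ?addn0.
  rewrite big_split /= sum_g (bigD1 i0) //= eqxx big1 ?addn1 //.
  by move=> i /andP[_ /negbTE ->].
have eq_gf : (\sum_(i | P i) f i = \sum_(i | P i) g i)%N.
  apply: eq_bigr => i Pi; apply/eqP; rewrite eqn_leq le_g_f /= leqNgt.
  by have := full i; rewrite Pi /= => ->.
by move: le_n_sum; rewrite eq_gf sum_g ltnn.
Qed.

Lemma leq_partial_sum_defect (I : finType) (P Q : pred I) (f g : I -> nat) :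
  (forall i, P i -> g i <= f i)%N ->
  (\sum_(i | P i && Q i) f i
     <= \sum_(i | P i && Q i) g i + (\sum_(i | P i) f i - \sum_(i | P i) g i))%N.
Proof.
move=> le_gf.
rewrite [(\sum_(i | P i) f i)%N](bigID Q) [(\sum_(i | P i) g i)%N](bigID Q) /=.
have : (\sum_(i | P i && ~~ Q i) g i <= \sum_(i | P i && ~~ Q i) f i)%N.
  by apply: leq_sum => i /andP[Pi _]; exact: le_gf.
have : (\sum_(i | P i && Q i) g i <= \sum_(i | P i && Q i) f i)%N.
  by apply: leq_sum => i /andP[Pi _]; exact: le_gf.
lia.
Qed.

Lemma big_notin_vanishing (I : finType) (P : pred I) (X : {set I}) (f : I -> nat) :
  {in X, f =1 fun=> 0%N} ->
  (\sum_(i | P i && (i \notin X)) f i = \sum_(i | P i) f i)%N.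
Proof.
by move=> f0; rewrite [RHS](bigID (mem X)) /= [in RHS]big1 ?add0n // => i /andP[_ /f0].
Qed.

Section RemovedPMs.

Variables (V : finType) (parent : V -> V) (X : {set V}) (g : V -> nat).
Hypothesis g0 : {in X, g =1 fun=> 0%N}.

Lemma sum_pm_vanishing :
  (\sum_(h | is_pm parent h && (h \notin X)) g h
     = \sum_(h | is_pm parent h && (h \notin set0)) g h)%N.
Proof. by rewrite !big_notin_vanishing // => h; rewrite in_set0. Qed.

Lemma nv_vanishing v : nv parent X g v = nv parent set0 g v.
Proof.
rewrite /nv; under eq_bigl do rewrite andbAC.
by rewrite big_notin_vanishing //; apply: eq_bigl => h; rewrite in_set0 andbT.
Qed.

End RemovedPMs.

Theorem lemma3 (R : realFieldType) (V : finType) (parent : V -> V) (r : V)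
    (c : V -> nat) (b : V -> R) (N N' : nat) (B : R) (C : V -> nat) :
  is_rooted_tree parent r ->
  (forall v, v != r -> 0 <= b v) ->
  (0 < N)%N -> 0 <= B ->
  (1 <= N')%N -> (N' <= N)%N ->
  vce parent r set0 c b (N + N') B C ->
  (forall h, is_pm parent h -> (C h <= N')%N) ->
  svce parent r c b N B C
    (fun v => (minn (nv parent set0 C v) (N + N' - nv parent set0 C v))%:R * B).
Proof.
move=> _ _ _ B_ge0 _ _ [le_C_c sum_C bw_C] le_C_N'.
split=> [h pm_h | v v_r | F pm_F].
- by apply: le_C_c; rewrite ?in_set0.
- by rewrite mulr_ge0 ?ler0n ?bw_C ?in_set0.
pose P h := is_pm parent h && (h \notin set0).
pose f h := if h == F then 0%N else C h.
have sum_f : (\sum_(h | P h) f h + C F = N + N')%N.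
  rewrite -sum_C (bigD1 F) 1?(bigD1 F (P := P)) /P ?pm_F ?in_set0 //= /f eqxx.
  by rewrite add0n addnC; congr (_ + _)%N; apply: eq_bigr => h /andP[_ /negbTE ->].
have le_N_sum_f : (N <= \sum_(h | P h) f h)%N by have := le_C_N' F pm_F; lia.
have [g [le_g_f sum_g]] := @exists_subfun_sum _ P f N le_N_sum_f.
have g0 : {in [set F], g =1 fun=> 0%N}.
  by move=> h /set1P ->; apply/eqP; rewrite -leqn0 (leq_trans (le_g_f F)) /f ?eqxx.
have le_g_C h : (g h <= C h)%N.
  by apply: leq_trans (le_g_f h) _; rewrite /f; case: eqP.
exists g; split=> [h _ _ | | v _ _]; first exact: le_g_C.
  by rewrite sum_pm_vanishing.
rewrite nv_vanishing // ler_wpM2r // ler_nat.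
apply: leq_minn_shift; first by apply: leq_sum => h _; exact: le_g_C.
have := @leq_partial_sum_defect _ P (in_subtree parent v) C g (fun h _ => le_g_C h).
by rewrite sum_C sum_g addKn.
Qed.
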